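(* Let $(\mathsf{T}, \mu, \eta, \mathsf{n}, \mathsf{n}_{K})$ be a symmetric comonoidal monad and $(!, \delta, \varepsilon, \Delta, \mathsf{e})$ be a coalgebra modality on the same symmetric monoidal category $(\mathbb{X}, \otimes, K)$, and let $\lambda$ be a coalgebra mixed distributive law of $(\mathsf{T}, \mu, \eta, \mathsf{n}, \mathsf{n}_{K})$ over $(!, \delta, \varepsilon, \Delta, \mathsf{e})$. If $(A, \omega)$ is a $!$-coalgebra, then $\mathsf{T}(\Delta^\omega);\mathsf{n}_{A,A} = \Delta^{\omega^\flat}$ and $\mathsf{T}(\mathsf{e}^\omega);\mathsf{n}_K = \mathsf{e}^{\omega^\flat}$, where $\omega^\flat := \mathsf{T}(\omega);\lambda_A : \mathsf{T}(A)\to !\mathsf{T}(A)$.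
   Context: Composition is in diagrammatic order. A symmetric comonoidal monad $(\mathsf{T},\mu,\eta,\mathsf{n},\mathsf{n}_K)$ is a monad with symmetric oplax monoidal structure $\mathsf{n}_{A,B}:\mathsf{T}(A\otimes B)\to\mathsf{T}(A)\otimes\mathsf{T}(B)$, $\mathsf{n}_K:\mathsf{T}(K)\to K$ compatible with $\mu,\eta$. A coalgebra modality $(!,\delta,\varepsilon,\Delta,\mathsf{e})$ is a comonad $(!,\delta,\varepsilon)$ with natural transformations $\Delta_A:!(A)\to!(A)\otimes!(A)$, $\mathsf{e}_A:!(A)\to K$ making each $(!(A),\Delta_A,\mathsf{e}_A)$ a cocommutative comonoid such that $\delta_A$ is a comonoid morphism. For a $!$-coalgebra $(B,\omega)$ put $\Delta^\omega:=\omega;\Delta_B;(\varepsilon_B\otimes\varepsilon_B)$ and $\mathsf{e}^\omega:=\omega;\mathsf{e}_B$. A mixed distributive law is a natural $\lambda_A:\mathsf{T}!(A)\to!\mathsf{T}(A)$ with $\mu_{!(A)};\lambda_A=\mathsf{T}(\lambda_A);\lambda_{\mathsf{T}(A)};!(\mu_A)$, $\eta_{!(A)};\lambda_A=!(\eta_A)$, $\mathsf{T}(\delta_A);\lambda_{!(A)};!(\lambda_A)=\lambda_A;\delta_{\mathsf{T}(A)}$, $\lambda_A;\varepsilon_{\mathsf{T}(A)}=\mathsf{T}(\varepsilon_A)$; it is a coalgebra mixed distributive law if in addition $\mathsf{T}(\Delta_A);\mathsf{n}_{!(A),!(A)};(\lambda_A\otimes\lambda_A)=\lambda_A;\Delta_{\mathsf{T}(A)}$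 and $\mathsf{T}(\mathsf{e}_A);\mathsf{n}_K=\lambda_A;\mathsf{e}_{\mathsf{T}(A)}$. For such $\lambda$, $(\mathsf{T}(A),\omega^\flat)$ is a $!$-coalgebra. *)

(* Composition is diagrammatic: f ;; g
   means "first f, then g".  Equality of morphisms is Leibniz equality. *)

Set Implicit Arguments.
Unset Strict Implicit.

Declare Scope cat_scope.
Open Scope cat_scope.

Record Category := {
  ob :> Type;
  hom : ob -> ob -> Type;
  idm : forall A, hom A A;
  comp : forall {A B C}, hom A B -> hom B C -> hom A C;
  comp_id_l : forall A B (f : hom A B), comp (idm A) f = f;
  comp_id_r : forall A B (f : hom A B), comp f (idm B) = f;
  comp_assoc : forall A B C D (f : hom A B) (g : hom B C) (h : hom C D),
      comp (comp f g) h = comp f (comp g h)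
}.

Arguments idm {c} A.
Arguments comp {c A B C} f g.
Notation "f ;; g" := (comp f g) (at level 40, left associativity) : cat_scope.

Record SymMonCat := {
  cat :> Category;
  tens : cat -> cat -> cat;
  tensm : forall {A B C D : cat}, hom A B -> hom C D -> hom (tens A C) (tens B D);
  unitK : cat;
  assoc : forall A B C : cat, hom (tens (tens A B) C) (tens A (tens B C));
  assoc_inv : forall A B C : cat, hom (tens A (tens B C)) (tens (tens A B) C);
  lunit : forall A : cat, hom (tens unitK A) A;
  lunit_inv : forall A : cat, hom A (tens unitK A);
  runit : forall A : cat, hom (tens A unitK) A;
  runit_inv : forall A : cat, hom A (tens A unitK);
  sym : forall A B : cat, hom (tens A B) (tens B A);
  tensm_id : forall A B : cat, tensm (idm A) (idm B) = idm (tens A B);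
  tensm_comp : forall (A B C D E F : cat) (f : hom A B) (g : hom B C)
      (h : hom D E) (k : hom E F),
      tensm (f ;; g) (h ;; k) = tensm f h ;; tensm g k;
  assoc_nat : forall (A A' B B' C C' : cat) (f : hom A A') (g : hom B B') (h : hom C C'),
      tensm (tensm f g) h ;; assoc A' B' C' = assoc A B C ;; tensm f (tensm g h);
  lunit_nat : forall (A B : cat) (f : hom A B),
      tensm (idm unitK) f ;; lunit B = lunit A ;; f;
  runit_nat : forall (A B : cat) (f : hom A B),
      tensm f (idm unitK) ;; runit B = runit A ;; f;
  sym_nat : forall (A A' B B' : cat) (f : hom A A') (g : hom B B'),
      tensm f g ;; sym A' B' = sym A B ;; tensm g f;
  assoc_iso1 : forall A B C : cat, assoc A B C ;; assoc_inv A B C = idm _;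
  assoc_iso2 : forall A B C : cat, assoc_inv A B C ;; assoc A B C = idm _;
  lunit_iso1 : forall A : cat, lunit A ;; lunit_inv A = idm _;
  lunit_iso2 : forall A : cat, lunit_inv A ;; lunit A = idm _;
  runit_iso1 : forall A : cat, runit A ;; runit_inv A = idm _;
  runit_iso2 : forall A : cat, runit_inv A ;; runit A = idm _;
  sym_invol : forall A B : cat, sym A B ;; sym B A = idm _;
  pentagon : forall A B C D : cat,
      tensm (assoc A B C) (idm D) ;; assoc A (tens B C) D ;; tensm (idm A) (assoc B C D)
      = assoc (tens A B) C D ;; assoc A B (tens C D);
  triangle : forall A B : cat,
      assoc A unitK B ;; tensm (idm A) (lunit B) = tensm (runit A) (idm B);
  hexagon : forall A B C : cat,
      assoc A B C ;; sym A (tens B C) ;; assoc B C A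
      = tensm (sym A B) (idm C) ;; assoc B A C ;; tensm (idm B) (sym A C)
}.

Arguments tens {s} A B.
Arguments tensm {s A B C D} f g.
Arguments unitK {s}.
Arguments assoc {s} A B C.
Arguments lunit {s} A.
Arguments runit {s} A.
Arguments sym {s} A B.
Notation "A ⊗ B" := (tens A B) (at level 35, right associativity) : cat_scope.
Notation "f ⊗m g" := (tensm f g) (at level 35, right associativity) : cat_scope.

Record Endofunctor (C : Category) := {
  F0 :> C -> C;
  F1 : forall {A B : C}, hom A B -> hom (F0 A) (F0 B);
  F1_id : forall A : C, F1 (idm A) = idm (F0 A);
  F1_comp : forall (A B D : C) (f : hom A B) (g : hom B D), F1 (f ;; g) = F1 f ;; F1 g
}.
Arguments F1 {C} e {A B} f.

Record SymComonoidalMonad (X : SymMonCat) := {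
  T :> Endofunctor X;
  mu : forall A : X, hom (T (T A)) (T A);
  eta : forall A : X, hom A (T A);
  nT : forall A B : X, hom (T (A ⊗ B)) (T A ⊗ T B);
  nK : hom (T unitK) (@unitK X);
  mu_nat : forall (A B : X) (f : hom A B), F1 T (F1 T f) ;; mu B = mu A ;; F1 T f;
  eta_nat : forall (A B : X) (f : hom A B), f ;; eta B = eta A ;; F1 T f;
  mu_assoc : forall A : X, F1 T (mu A) ;; mu A = mu (T A) ;; mu A;
  mu_eta_l : forall A : X, eta (T A) ;; mu A = idm (T A);
  mu_eta_r : forall A : X, F1 T (eta A) ;; mu A = idm (T A);
  n_nat : forall (A A' B B' : X) (f : hom A A') (g : hom B B'),
      F1 T (f ⊗m g) ;; nT A' B' = nT A B ;; (F1 T f ⊗m F1 T g);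
  n_assoc : forall A B C : X,
      F1 T (assoc A B C) ;; nT A (B ⊗ C) ;; (idm (T A) ⊗m nT B C)
      = nT (A ⊗ B) C ;; (nT A B ⊗m idm (T C)) ;; assoc (T A) (T B) (T C);
  n_lunit : forall A : X,
      nT unitK A ;; (nK ⊗m idm (T A)) ;; lunit (T A) = F1 T (lunit A);
  n_runit : forall A : X,
      nT A unitK ;; (idm (T A) ⊗m nK) ;; runit (T A) = F1 T (runit A);
  n_sym : forall A B : X, F1 T (sym A B) ;; nT B A = nT A B ;; sym (T A) (T B);
  n_mu : forall A B : X,
      mu (A ⊗ B) ;; nT A B = F1 T (nT A B) ;; nT (T A) (T B) ;; (mu A ⊗m mu B);
  nK_mu : mu unitK ;; nK = F1 T nK ;; nK;
  n_eta : forall A B : X, eta (A ⊗ B) ;; nT A B = eta A ⊗m eta B;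
  nK_eta : eta unitK ;; nK = idm unitK
}.
Arguments mu {X} s A.
Arguments eta {X} s A.
Arguments nT {X} s A B.
Arguments nK {X} s.

Record CoalgebraModality (X : SymMonCat) := {
  Bang :> Endofunctor X;
  delta : forall A : X, hom (Bang A) (Bang (Bang A));
  eps : forall A : X, hom (Bang A) A;
  Dup : forall A : X, hom (Bang A) (Bang A ⊗ Bang A);
  ecount : forall A : X, hom (Bang A) unitK;
  delta_nat : forall (A B : X) (f : hom A B),
      F1 Bang f ;; delta B = delta A ;; F1 Bang (F1 Bang f);
  eps_nat : forall (A B : X) (f : hom A B), F1 Bang f ;; eps B = eps A ;; f;
  delta_coassoc : forall A : X, delta A ;; delta (Bang A) = delta A ;; F1 Bang (delta A);
  delta_eps_l : forall A : X, delta A ;; eps (Bang A) = idm (Bang A);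
  delta_eps_r : forall A : X, delta A ;; F1 Bang (eps A) = idm (Bang A);
  Dup_nat : forall (A B : X) (f : hom A B),
      F1 Bang f ;; Dup B = Dup A ;; (F1 Bang f ⊗m F1 Bang f);
  ecount_nat : forall (A B : X) (f : hom A B), F1 Bang f ;; ecount B = ecount A;
  Dup_coassoc : forall A : X,
      Dup A ;; (Dup A ⊗m idm (Bang A)) ;; assoc _ _ _ = Dup A ;; (idm (Bang A) ⊗m Dup A);
  Dup_counit_l : forall A : X, Dup A ;; (ecount A ⊗m idm (Bang A)) ;; lunit _ = idm (Bang A);
  Dup_counit_r : forall A : X, Dup A ;; (idm (Bang A) ⊗m ecount A) ;; runit _ = idm (Bang A);
  Dup_cocomm : forall A : X, Dup A ;; sym _ _ = Dup A;
  delta_Dup : forall A : X, delta A ;; Dup (Bang A) = Dup A ;; (delta A ⊗m delta A);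
  delta_ecount : forall A : X, delta A ;; ecount (Bang A) = ecount A
}.
Arguments delta {X} c A.
Arguments eps {X} c A.
Arguments Dup {X} c A.
Arguments ecount {X} c A.

Definition is_mixed_distributive_law (X : SymMonCat) (Tm : SymComonoidalMonad X)
    (M : CoalgebraModality X) (lam : forall A : X, hom (Tm (M A)) (M (Tm A))) : Prop :=
  (forall (A B : X) (f : hom A B),
      F1 Tm (F1 M f) ;; lam B = lam A ;; F1 M (F1 Tm f)) /\
  (forall A : X, mu Tm (M A) ;; lam A = F1 Tm (lam A) ;; lam (Tm A) ;; F1 M (mu Tm A)) /\
  (forall A : X, eta Tm (M A) ;; lam A = F1 M (eta Tm A)) /\
  (forall A : X, F1 Tm (delta M A) ;; lam (M A) ;; F1 M (lam A) = lam A ;; delta M (Tm A)) /\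
  (forall A : X, lam A ;; eps M (Tm A) = F1 Tm (eps M A)).

Definition is_coalgebra_mixed_distributive_law (X : SymMonCat)
    (Tm : SymComonoidalMonad X) (M : CoalgebraModality X)
    (lam : forall A : X, hom (Tm (M A)) (M (Tm A))) : Prop :=
  is_mixed_distributive_law lam /\
  (forall A : X, F1 Tm (Dup M A) ;; nT Tm (M A) (M A) ;; (lam A ⊗m lam A)
                 = lam A ;; Dup M (Tm A)) /\
  (forall A : X, F1 Tm (ecount M A) ;; nK Tm = lam A ;; ecount M (Tm A)).

Definition is_bang_coalgebra (X : SymMonCat) (M : CoalgebraModality X)
    (A : X) (w : hom A (M A)) : Prop :=
  w ;; eps M A = idm A /\ w ;; delta M A = w ;; F1 M w.

Definition Dup_coalg (X : SymMonCat) (M : CoalgebraModality X) (B : X)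
    (w : hom B (M B)) : hom B (B ⊗ B) :=
  w ;; Dup M B ;; (eps M B ⊗m eps M B).

Definition ecount_coalg (X : SymMonCat) (M : CoalgebraModality X) (B : X)
    (w : hom B (M B)) : hom B unitK :=
  w ;; ecount M B.

Definition omega_flat (X : SymMonCat) (Tm : SymComonoidalMonad X)
    (M : CoalgebraModality X) (lam : forall A : X, hom (Tm (M A)) (M (Tm A)))
    (A : X) (w : hom A (M A)) : hom (Tm A) (M (Tm A)) :=
  F1 Tm w ;; lam A.


(* Only three compatibilities of λ are used: T(ε) = λ;ε, the comonoid law
   T(Δ);n;(λ⊗λ) = λ;Δ, and T(e);n_K = λ;e.  By naturality of n, the factor
   T(ε⊗ε) in T(Δ^ω);n slides past n to T(ε)⊗T(ε) = (λ⊗λ);(ε⊗ε), and the comonoid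
   law then rewrites T(ω);T(Δ);n;(λ⊗λ) into ω^♭;Δ. *)

Section CoalgebraMixedDistributiveLaw.

Variables (X : SymMonCat) (Tm : SymComonoidalMonad X) (M : CoalgebraModality X).
Variable lam : forall A : X, hom (Tm (M A)) (M (Tm A)).

Hypothesis lam_eps : forall A : X, lam A ;; eps M (Tm A) = F1 Tm (eps M A).
Hypothesis lam_Dup : forall A : X,
  F1 Tm (Dup M A) ;; nT Tm (M A) (M A) ;; (lam A ⊗m lam A) = lam A ;; Dup M (Tm A).
Hypothesis lam_ecount : forall A : X,
  F1 Tm (ecount M A) ;; nK Tm = lam A ;; ecount M (Tm A).

Lemma T_Dup_coalg_n (B : X) (w : hom B (M B)) :
  F1 Tm (Dup_coalg w) ;; nT Tm B B = Dup_coalg (omega_flat lam w).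
Proof.
  unfold Dup_coalg, omega_flat.
  rewrite (comp_assoc (F1 Tm w) (lam B)), <- lam_Dup.
  rewrite !F1_comp, !comp_assoc, n_nat, <- !lam_eps, tensm_comp.
  reflexivity.
Qed.

Lemma T_ecount_coalg_nK (B : X) (w : hom B (M B)) :
  F1 Tm (ecount_coalg w) ;; nK Tm = ecount_coalg (omega_flat lam w).
Proof.
  unfold ecount_coalg, omega_flat.
  rewrite F1_comp, !comp_assoc, lam_ecount.
  reflexivity.
Qed.

End CoalgebraMixedDistributiveLaw.

Theorem lemma6p3 (X : SymMonCat) (Tm : SymComonoidalMonad X)
    (M : CoalgebraModality X) (lam : forall A : X, hom (Tm (M A)) (M (Tm A)))
    (Hlam : is_coalgebra_mixed_distributive_law lam)
    (A : X) (w : hom A (M A)) (Hw : is_bang_coalgebra w) :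
  F1 Tm (Dup_coalg w) ;; nT Tm A A = Dup_coalg (omega_flat lam w) /\
  F1 Tm (ecount_coalg w) ;; nK Tm = ecount_coalg (omega_flat lam w).
Proof.
  destruct Hlam as [[_ [_ [_ [_ lam_eps]]]] [lam_Dup lam_ecount]].
  split; [apply T_Dup_coalg_n | apply T_ecount_coalg_nK]; assumption.
Qed.
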